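(* Let $\nu\in\mathbb{C}$, $k\in\mathbb{N}$, $\epsilon_1,\epsilon_2\in\{\pm1\}$, $E_0=\epsilon_1(4k+2)+4\epsilon_2\nu$, and $$Y(z)=z^{2\epsilon_1\epsilon_2\nu+1}e^{-\epsilon_1z^2/2}\,{}_1F_1(-k,2\epsilon_1\epsilon_2\nu+1,\epsilon_1z^2)$$ (with ${}_1F_1$ replaced by its regularization $\frac{\Gamma(2\epsilon_1\epsilon_2\nu+1+k)}{\Gamma(2\epsilon_1\epsilon_2\nu+1)}{}_1F_1(\cdots)$ when needed). Then there exists $M\in\mathbb{C}(z,E)$, regular at $E=E_0$, with $M(z,E_0)=-Y'(z)/Y(z)$ and such that $$H(z,E):=M^2z^2+Mz-M'z^2-z^4+z^2E-4\nu^2+1=O((E-E_0)^2)\quad (E\to E_0)$$ if and only if $2\epsilon_1\epsilon_2\nu+k\in\mathbb{N}$.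
   Context: $'$ denotes $\partial/\partial z$. $Y$ is a hyperexponential solution of $z^2Y''-zY'+(-z^4+E_0z^2-4\nu^2+1)Y=0$; equivalently $M(z,E_0)=-Y'/Y$ makes $H(z,E_0)=0$. In the paper, this expresses that the polynomial $w(E)$ in the factorization $H=w(E)P(z)/Q(z,E)$ may have a double root at $E_0$, which is required for the resulting potential to be quantum integrable. *)

(* Bivariate polynomials in (z,E) are {poly {poly C}}:
   the OUTER variable is E, the INNER variable (coefficients) is z. *)
From HB Require Import structures.
From mathcomp Require Import all_boot all_order all_algebra.
Set Implicit Arguments. Unset Strict Implicit. Unset Printing Implicit Defensive.
Import Order.TTheory GRing.Theory Num.Theory.
Local Open Scope ring_scope.

Section Defs.
Variable C : numClosedFieldType.

Definition poch (x : C) (n : nat) : C := \prod_(i < n) (x + i%:R).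

(* Regularized  Gamma(b+k)/Gamma(b) * 1F1(-k; b; x), as a polynomial in x:
   sum_{j<=k} (-k)_j (b)_k/(b)_j x^j / j!  with (b)_k/(b)_j = (b+j)_{k-j}. *)
Definition hyp1F1reg (k : nat) (b : C) : {poly C} :=
  \sum_(j < k.+1)
     ((poch (- k%:R) j * poch (b + j%:R) (k - j) / (j`!)%:R) *: 'X^j).

Definition Ypoly (k : nat) (b e1 : C) : {poly C} :=
  hyp1F1reg k b \Po (e1 *: 'X^2).

(* Y(z) = z^b e^{-e1 z^2/2} P(z);  its logarithmic derivative is the rational
   function Y'/Y = b/z - e1 z + P'/P = logdY_num / logdY_den. *)
Definition logdY_num (k : nat) (b e1 : C) : {poly C} :=
  b *: Ypoly k b e1 - e1 *: ('X^2 * Ypoly k b e1) + 'X * (Ypoly k b e1)^`().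
Definition logdY_den (k : nat) (b e1 : C) : {poly C} := 'X * Ypoly k b e1.

Definition zB : {poly {poly C}} := ('X : {poly C})%:P.
Definition cstB (c : C) : {poly {poly C}} := (c%:P)%:P.
Definition dz (A : {poly {poly C}}) : {poly {poly C}} :=
  map_poly (fun p : {poly C} => p^`()) A.

(* For M = A/B, H(z,E) = M^2 z^2 + M z - M' z^2 - z^4 + z^2 E - 4 nu^2 + 1
   equals riccatiN nu A B / B^2. *)
Definition riccatiN (nu : C) (A B : {poly {poly C}}) : {poly {poly C}} :=
  A ^+ 2 * zB ^+ 2 + A * B * zB - (dz A * B - A * dz B) * zB ^+ 2
  + (- zB ^+ 4 + zB ^+ 2 * 'X - cstB (4 * nu ^+ 2) + 1) * B ^+ 2.

End Defs.

(* Expand the Riccati numerator at [E0] as [N0 + (E - E0) N1 + O((E - E0)^2)].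
   With [M(E0) = -Y'/Y], [N1 = 0] is the linearised Riccati equation for
   [w = dM/dE(E0)]; writing [Y = z^b e^(-e1 z^2/2) P] and [u = w P^2] it becomes
   [z u' = (1 - 2 b + 2 e1 z^2) u + z P^2]. A rational solution can only have a
   pole at [0], so [z^d u] is a polynomial, and comparing coefficients this is
   possible only if [b] is a positive integer or [sum_i (b)_i [F^2]_i] vanishes,
   where [P(z) = F(e1 z^2)]; that sum equals [k! (b)_k]. Either way [b - 1 + k]
   is a natural number. Conversely, if [b - 1 + k = n] then [z^(2n+2) P^2] lies
   in the range of the operator, which produces [dM/dE] and hence [M]. *)

From HB Require Import structures.
From mathcomp Require Import all_boot all_order all_algebra.
From mathcomp Require Import ring zify.
Set Implicit Arguments.
Unset Strict Implicit.
Unset Printing Implicit Defensive.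
Import Order.TTheory GRing.Theory Num.Theory.
Local Open Scope ring_scope.

Section PolyODE.
Context {R : numFieldType}.

Lemma coef_Xderiv (D : {poly R}) i : ('X * D^`())`_i = D`_i *+ i.
Proof. by rewrite coefXM; case: i => [|i] //=; rewrite coef_deriv. Qed.

Lemma Xderiv_Xn n : 'X * ('X^n)^`() = (n%:R)%:P * ('X^n : {poly R}).
Proof.
rewrite derivXn; case: n => [|n]; first by rewrite !mulr0n mulr0 polyC0 mul0r.
by rewrite /= mulrnAr -exprS mul_polyC scaler_nat.
Qed.

(* Comparing coefficients in [X D' = h D] forces [h = deg D] and kills every
   other coefficient of [D]. *)
Lemma dvdp_Xderiv_monomial (D : {poly R}) : D != 0 -> D %| 'X * D^`() ->
  D = lead_coef D *: 'X^((size D).-1).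
Proof.
move=> D_neq0 /dvdpP [h Dh].
have size_h : (size h <= 1)%N.
  have [->|h_neq0] := eqVneq h 0; first by rewrite size_poly0.
  have : (size ('X * D^`())%R <= size D)%N.
    have [->|dD_neq0] := eqVneq D^`() 0; first by rewrite mulr0 size_poly0.
    by rewrite mulrC size_mulX //; exact: lt_size_deriv.
  have : (0 < size D)%N by rewrite size_poly_gt0.
  rewrite Dh size_mul // -subn1; move: (size h) (size D); lia.
have hE := size1_polyC size_h; set l := h`_0 in hE.
have coefD i : D`_i *+ i = l * D`_i by rewrite -coef_Xderiv Dh hE coefCM.
set d := (size D).-1.
have lead_neq0 : D`_d != 0 by rewrite -lead_coefE lead_coef_eq0.
have lE : l = d%:R by apply: (mulIf lead_neq0); rewrite -coefD mulr_natl.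
apply/polyP => i; rewrite coefZ coefXn.
have [->|i_neq_d] := eqVneq i d; first by rewrite mulr1 lead_coefE.
have : (i%:R - d%:R) * D`_i = 0 by rewrite mulrBl -lE -coefD mulr_natl subrr.
by move/eqP; rewrite mulf_eq0 subr_eq0 eqr_nat (negbTE i_neq_d) mulr0 => /eqP.
Qed.

Definition ode_op (beta e : R) (V : {poly R}) : {poly R} :=
  'X * V^`() - beta%:P * V - e%:P * ('X^2 * V).

Definition ode_range beta e (W : {poly R}) := exists V, ode_op beta e V = W.

Lemma coef_ode_op beta e (V : {poly R}) n :
  (ode_op beta e V)`_n =
  V`_n *+ n - beta * V`_n - e * (if (n < 2)%N then 0 else V`_(n - 2)).
Proof. by rewrite /ode_op !coefB !coefCM coefXnM coef_Xderiv. Qed.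

Lemma coef_comp_scaleX2 (p : {poly R}) (e : R) j :
  (p \Po (e *: 'X^2))`_(2 * j) = e ^+ j * p`_j.
Proof.
rewrite comp_polyE coef_sum.
rewrite (eq_bigr (fun i : 'I_(size p) => if (i : nat) == j then e ^+ j * p`_j else 0)).
  rewrite -big_mkcond /= (big_ord1_eq _ (fun _ => e ^+ j * p`_j)).
  by case: ltnP => // jp; rewrite nth_default // mulr0.
move=> i _; rewrite exprZn -exprM !coefZ coefXn eqn_mul2l /= eq_sym.
by case: eqP => [->|_] /=; rewrite ?mulr1 ?mulr0 //; ring.
Qed.

Lemma ode_opXn beta e n :
  ode_op beta e 'X^n = (n%:R - beta) *: 'X^n - e *: 'X^(n.+2).
Proof. by rewrite /ode_op Xderiv_Xn -!mul_polyC polyCB !exprS; ring. Qed.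

Lemma ode_range0 beta e : ode_range beta e 0.
Proof. by exists 0; rewrite /ode_op deriv0 !mulr0 subrr subr0. Qed.

Lemma ode_rangeD beta e W1 W2 :
  ode_range beta e W1 -> ode_range beta e W2 -> ode_range beta e (W1 + W2).
Proof. by move=> [V1 <-] [V2 <-]; exists (V1 + V2); rewrite /ode_op derivD; ring. Qed.

Lemma ode_rangeZ beta e a W : ode_range beta e W -> ode_range beta e (a *: W).
Proof. by move=> [V <-]; exists (a *: V); rewrite /ode_op derivZ -!mul_polyC; ring. Qed.

Lemma ode_range_sum beta e n (F : 'I_n -> {poly R}) :
  (forall i, ode_range beta e (F i)) -> ode_range beta e (\sum_(i < n) F i).
Proof.
move=> rangeF; apply: (big_ind (ode_range beta e)) => //; first exact: ode_range0.
by move=> ? ?; apply: ode_rangeD.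
Qed.

(* Below degree [d + 1] the solution satisfies a homogeneous recursion whose
   only possible resonances are [b = j], [0 < j]. *)
Lemma ode_op_low_coef_eq0 (U Q : {poly R}) (b e c : R) d :
  ode_op (d%:R + (1 - 2 * b)) e U = c%:P * ('X^(d.+1) * Q) ->
  (forall j, (0 < j)%N -> (2 * j <= d.+1)%N -> b != j%:R) ->
  forall n j, (0 < j)%N -> (n + 2 * j)%N = d.+1 -> U`_n = 0.
Proof.
move=> U_ode b_nres; elim/ltn_ind => n IHn j j_gt0 njd.
have := congr1 (fun p : {poly R} => p`_n) U_ode; rewrite /= coef_ode_op coefCM coefXnM.
have -> : (n < d.+1)%N by lia.
have -> : (if (n < 2)%N then 0 else U`_(n - 2)) = 0.
  by case: ltnP => n2 //; apply: (IHn (n - 2)%N _ j.+1) => //; lia.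
move=> coef_n.
have : (n%:R - (d%:R + (1 - 2 * b))) * U`_n = 0.
  by move: coef_n => /=; rewrite !mulr0 subr0 mulrBl [n%:R * _]mulr_natl.
have -> : n%:R - (d%:R + (1 - 2 * b)) = 2 * (b - j%:R) :> R.
  have dE : (d%:R : R) = n%:R + 2 * j%:R - 1.
    by have := congr1 (fun m => m%:R : R) njd; rewrite /= natrD natrM mulrSr => ->; ring.
  by rewrite dE; ring.
move/eqP; rewrite !mulf_eq0 pnatr_eq0 subr_eq0 /=.
by rewrite (negbTE (b_nres j j_gt0 _)) //=; [move/eqP | lia].
Qed.

Lemma rational_ode_cancel (U1 D1 G Q : {poly R}) (g e : R) : G != 0 ->
  'X * ((U1 * G)^`() * (D1 * G) - U1 * G * (D1 * G)^`())
    = (g%:P + e%:P * 'X^2) * (U1 * G) * (D1 * G) + 'X * Q * (D1 * G) ^+ 2 ->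
  'X * (U1^`() * D1 - U1 * D1^`()) = (g%:P + e%:P * 'X^2) * U1 * D1 + 'X * Q * D1 ^+ 2.
Proof.
move=> G_neq0; rewrite !derivM => UD_ode; apply: (mulfI (expf_neq0 2 G_neq0)).
transitivity ('X * ((U1^`() * G + U1 * G^`()) * (D1 * G)
                   - U1 * G * (D1^`() * G + D1 * G^`()))); first by ring.
by rewrite UD_ode; ring.
Qed.

(* After cancelling [gcd(U, D)], the equation shows [D1 %| X D1'], so the
   reduced denominator is a monomial [c X^d] and [X^d U/D] is a polynomial. *)
Lemma rational_ode_solution_poly (U D Q : {poly R}) (g e : R) : D != 0 ->
  'X * (U^`() * D - U * D^`()) = (g%:P + e%:P * 'X^2) * U * D + 'X * Q * D ^+ 2 ->
  exists d c U1, c != 0 /\ ode_op (d%:R + g) e U1 = c%:P * ('X^(d.+1) * Q).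
Proof.
move=> D_neq0 UD_ode.
set G := gcdp U D.
have G_neq0 : G != 0 by rewrite gcdp_eq0 negb_and D_neq0 orbT.
set U1 := U %/ G; set D1 := D %/ G.
have UE : U = U1 * G by rewrite divpK // dvdp_gcdl.
have DE : D = D1 * G by rewrite divpK // dvdp_gcdr.
have cop : coprimep U1 D1 by apply: coprimep_div_gcd; rewrite D_neq0 orbT.
have D1_neq0 : D1 != 0 by apply: contraNneq D_neq0 => D10; rewrite DE D10 mul0r.
have U1D1_ode : 'X * (U1^`() * D1 - U1 * D1^`())
    = (g%:P + e%:P * 'X^2) * U1 * D1 + 'X * Q * D1 ^+ 2.
  by apply: (rational_ode_cancel G_neq0); rewrite -UE -DE.
have dvdD1 : D1 %| 'X * D1^`().
  have : D1 %| U1 * ('X * D1^`()).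
    apply/dvdpP; exists ('X * U1^`() - (g%:P + e%:P * 'X^2) * U1 - 'X * Q * D1).
    transitivity ('X * U1^`() * D1 - 'X * (U1^`() * D1 - U1 * D1^`())); first by ring.
    by rewrite U1D1_ode; ring.
  by rewrite Gauss_dvdpr // coprimep_sym.
have c_neq0 : lead_coef D1 != 0 by rewrite lead_coef_eq0.
move: (lead_coef D1) ((size D1).-1) c_neq0 (dvdp_Xderiv_monomial D1_neq0 dvdD1)
  => c d c_neq0 D1E.
have XdD1 : 'X * D1^`() = (d%:R)%:P * D1.
  by rewrite D1E derivZ -scalerAr Xderiv_Xn -!mul_polyC; ring.
exists d, c, U1; split=> //.
apply: (mulfI D1_neq0).
transitivity ('X * (U1^`() * D1 - U1 * D1^`()) - (g%:P + e%:P * 'X^2) * U1 * D1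
   + U1 * ('X * D1^`() - (d%:R)%:P * D1)); first by rewrite /ode_op; ring.
have -> : c%:P * ('X^(d.+1) * Q) = 'X * Q * D1 by rewrite D1E -mul_polyC exprS; ring.
by rewrite U1D1_ode XdD1 subrr mulr0 addr0; ring.
Qed.

End PolyODE.

Section ConfluentRiccati.
Context {C : numClosedFieldType}.

Lemma coef_dz (A : {poly {poly C}}) i : (dz A)`_i = (A`_i)^`().
Proof. by rewrite /dz coef_map_id0 // deriv0. Qed.

Lemma dzD (A B : {poly {poly C}}) : dz (A + B) = dz A + dz B.
Proof. by apply/polyP=> i; rewrite coefD !coef_dz coefD derivD. Qed.

Lemma dzN (A : {poly {poly C}}) : dz (- A) = - dz A.
Proof. by apply/polyP=> i; rewrite coefN !coef_dz coefN derivN. Qed.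

Lemma dzC (p : {poly C}) : dz p%:P = (p^`())%:P.
Proof. by apply/polyP=> i; rewrite coef_dz !coefC; case: i => [|i] //=; rewrite deriv0. Qed.

Lemma dzM (A B : {poly {poly C}}) : dz (A * B) = dz A * B + A * dz B.
Proof.
apply/polyP=> i; rewrite coefD coef_dz !coefM raddf_sum -big_split /=.
by apply: eq_bigr => j _; rewrite derivM !coef_dz.
Qed.

Lemma dzX : dz ('X : {poly {poly C}}) = 0.
Proof.
apply/polyP=> i; rewrite coef_dz coefX coef0.
by case: (i == 1)%N; rewrite ?deriv0 // -polyC1 derivC.
Qed.

Definition potential0 (E0 nu : C) : {poly C} :=
  - 'X^4 + 'X^2 * E0%:P - (4 * nu ^+ 2)%:P + 1.

Definition riccati0 E0 nu (a0 b0 : {poly C}) : {poly C} :=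
  a0 ^+ 2 * 'X ^+ 2 + a0 * b0 * 'X - (a0^`() * b0 - a0 * b0^`()) * 'X ^+ 2
  + potential0 E0 nu * b0 ^+ 2.

Definition riccati1 E0 nu (a0 a1 b0 b1 : {poly C}) : {poly C} :=
  2%:R * a0 * a1 * 'X ^+ 2 + (a0 * b1 + a1 * b0) * 'X
  - (a0^`() * b1 + a1^`() * b0 - a0 * b1^`() - a1 * b0^`()) * 'X ^+ 2
  + 2%:R * potential0 E0 nu * b0 * b1 + 'X ^+ 2 * b0 ^+ 2.

Lemma riccatiN_taylor E0 nu (a0 a1 b0 b1 : {poly C}) (r s : {poly {poly C}}) :
  let e := 'X - (E0%:P)%:P in
  exists J, riccatiN nu (a0%:P + e * a1%:P + e ^+ 2 * r)
                        (b0%:P + e * b1%:P + e ^+ 2 * s)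
    = (riccati0 E0 nu a0 b0)%:P + e * (riccati1 E0 nu a0 a1 b0 b1)%:P + e ^+ 2 * J.
Proof.
move=> e.
have dz_e : dz e = 0 by rewrite /e dzD dzN dzX dzC derivC oppr0 addr0.
have dz_taylor (x y : {poly C}) t : dz (x%:P + e * y%:P + e ^+ 2 * t)
     = (x^`())%:P + e * (y^`())%:P + e ^+ 2 * dz t.
  have dz_e2 : dz (e ^+ 2) = 0 by rewrite expr2 dzM dz_e; ring.
  by rewrite !dzD !dzM !dzC ?dz_e2 ?dz_e; ring.
rewrite /riccatiN !dz_taylor /zB /cstB.
set z := ('X : {poly C})%:P.
set a := a0%:P; set b := a1%:P; set g := b0%:P; set d := b1%:P.
set a' := (a0^`())%:P; set b' := (a1^`())%:P.
set g' := (b0^`())%:P; set d' := (b1^`())%:P.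
set r' := dz r; set s' := dz s.
set V0 := (potential0 E0 nu)%:P.
have -> : - z ^+ 4 + z ^+ 2 * 'X - ((4 * nu ^+ 2)%:P)%:P + 1 = V0 + e * z ^+ 2.
  by rewrite /V0 /potential0 /z /e; ring.
exists ((b ^+ 2 + 2%:R * a * r + 2%:R * e * b * r + e ^+ 2 * r ^+ 2) * z ^+ 2
  + (b * d + a * s + g * r + e * (b * s + d * r) + e ^+ 2 * r * s) * z
  - ((b' * d + a' * s + g * r' + e * (b' * s + d * r') + e ^+ 2 * r' * s)
     - (b * d' + a * s' + g' * r + e * (b * s' + d' * r) + e ^+ 2 * r * s')) * z ^+ 2
  + V0 * (d ^+ 2 + 2%:R * g * s + 2%:R * e * d * s + e ^+ 2 * s ^+ 2)
  + 2%:R * z ^+ 2 * g * d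
  + e * z ^+ 2 * (d ^+ 2 + 2%:R * g * s + 2%:R * e * d * s + e ^+ 2 * s ^+ 2)).
by rewrite /riccati0 /riccati1 /V0 /a /b /g /d /a' /b' /g' /d' /z; ring.
Qed.

Lemma poly_taylor2 (A : {poly {poly C}}) (c : {poly C}) :
  exists a1 r, A = (A.[c])%:P + ('X - c%:P) * a1%:P + ('X - c%:P) ^+ 2 * r.
Proof.
have /factor_theorem [q Aq] : root (A - (A.[c])%:P) c.
  by rewrite /root hornerD hornerN hornerC subrr.
have /factor_theorem [r qr] : root (q - (q.[c])%:P) c.
  by rewrite /root hornerD hornerN hornerC subrr.
exists q.[c], r.
have AE : A = q * ('X - c%:P) + A.[c]%:P by rewrite -Aq; ring.
have qE : q = r * ('X - c%:P) + q.[c]%:P by rewrite -qr; ring.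
by rewrite {1}AE {1}qE; ring.
Qed.

Lemma riccatiN_dvd_sqr E0 nu (A B G : {poly {poly C}}) :
  riccatiN nu A B = ('X - (E0%:P)%:P) ^+ 2 * G ->
  exists a1 b1, riccati0 E0 nu A.[E0%:P] B.[E0%:P] = 0 /\
                riccati1 E0 nu A.[E0%:P] a1 B.[E0%:P] b1 = 0.
Proof.
set c := E0%:P; set a0 := A.[c]; set b0 := B.[c].
have [a1 [r AE]] := poly_taylor2 A c; have [b1 [s BE]] := poly_taylor2 B c.
rewrite AE BE; have [J ->] := riccatiN_taylor E0 nu a0 a1 b0 b1 r s.
set e := 'X - c%:P => ricE; exists a1, b1.
have e_c : e.[c] = 0 by rewrite /e hornerXsubC subrr.
have ric0 : riccati0 E0 nu a0 b0 = 0.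
  have := congr1 (horner^~ c) ricE.
  by rewrite /= !hornerD !hornerM !hornerC ?horner_exp e_c ?expr0n /= ?mul0r ?addr0.
split=> //; rewrite ric0 add0r in ricE.
have e_neq0 : e != 0 by rewrite polyXsubC_eq0.
have ric1E : (riccati1 E0 nu a0 a1 b0 b1)%:P = e * (G - J).
  by apply: (mulfI e_neq0); rewrite mulrA -expr2 mulrBr -ricE; ring.
by have := congr1 (horner^~ c) ric1E; rewrite /= hornerC hornerM e_c mul0r.
Qed.

Lemma poch0 (x : C) : poch x 0 = 1.
Proof. by rewrite /poch big_ord0. Qed.

Lemma pochSr (x : C) n : poch x n.+1 = poch x n * (x + n%:R).
Proof. by rewrite /poch big_ord_recr. Qed.

Lemma pochSl (x : C) n : poch x n.+1 = x * poch (x + 1) n.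
Proof.
rewrite /poch big_ord_recl; congr (_ * _); first by rewrite /= addr0.
by apply: eq_bigr => i _; rewrite lift0 mulrSr; ring.
Qed.

Lemma pochD (x : C) i j : poch x (i + j) = poch x i * poch (x + i%:R) j.
Proof.
elim: j => [|j IHj]; first by rewrite addn0 poch0 mulr1.
by rewrite addnS !pochSr IHj natrD; ring.
Qed.

Lemma poch_oppn k j : poch (- (k%:R : C)) j = (-1) ^+ j * (k ^_ j)%:R.
Proof.
elim: j => [|j IHj]; first by rewrite poch0 expr0 ffactn0 mul1r.
rewrite pochSr IHj ffactnSr natrM exprS.
have [jk|kj] := leqP j k; first by rewrite natrB //; ring.
by rewrite ffact_small //; ring.
Qed.

Lemma natr_fact_neq0 n : (n`!)%:R != 0 :> C.
Proof. by rewrite pnatr_eq0 -lt0n fact_gt0. Qed.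

Definition hyp_coef k (b : C) j :=
  poch (- k%:R) j * poch (b + j%:R) (k - j) / (j`!)%:R.

Lemma hyp1F1regE k (b : C) : hyp1F1reg k b = \poly_(j < k.+1) hyp_coef k b j.
Proof. by rewrite poly_def. Qed.

Lemma hyp_coef_poch k (b : C) j : (j <= k)%N ->
  hyp_coef k b j * poch b j = (-1) ^+ j * ('C(k, j))%:R * poch b k.
Proof.
move=> jk; rewrite /hyp_coef poch_oppn -bin_ffact natrM -(subnKC jk) pochD subnKC //.
by have := natr_fact_neq0 j; move: (j`!)%:R => F F_neq0; field.
Qed.

Lemma hyp_coef_kk k (b : C) : hyp_coef k b k = (-1) ^+ k.
Proof.
rewrite /hyp_coef poch_oppn ffactnn subnn poch0.
by have := natr_fact_neq0 k; move: (k`!)%:R => F F_neq0; field.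
Qed.

Lemma hyp_coef_recS k (b : C) i : (i < k)%N ->
  (i.+1)%:R * (i%:R + b) * hyp_coef k b i.+1 = (i%:R - k%:R) * hyp_coef k b i.
Proof.
move=> ik; rewrite /hyp_coef pochSr.
have -> : (k - i)%N = (k - i.+1).+1 by lia.
rewrite pochSl factS natrM !mulrSr.
have -> : b + (i%:R + 1) = b + i%:R + 1 by ring.
have iS_neq0 : i%:R + 1 != 0 :> C by rewrite -mulrSr pnatr_eq0.
move: (poch _ i) (poch _ (k - i.+1)) (natr_fact_neq0 i) => X1 X2.
by move: (i`!)%:R => F F_neq0; field; rewrite F_neq0 iS_neq0.
Qed.

Lemma hyp1F1reg_kummer k (b : C) :
  'X * (hyp1F1reg k b)^`()^`() + (b%:P - 'X) * (hyp1F1reg k b)^`()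
  + (k%:R)%:P * hyp1F1reg k b = 0.
Proof.
apply/polyP => i.
rewrite coef0 mulrBl !(coefD, coefB, coefN, coefCM, coef_Xderiv, coef_deriv).
rewrite hyp1F1regE !coef_poly.
case: (ltngtP i k) => [ik|ki|->]; last by rewrite ltnn ltnSn; ring.
- rewrite ltnS ik ltnW //.
  transitivity ((i.+1)%:R * (i%:R + b) * hyp_coef k b i.+1
                + (k%:R - i%:R) * hyp_coef k b i); first by ring.
  by rewrite hyp_coef_recS //; ring.
- have /negbTE -> : ~~ (i.+1 < k.+1)%N by rewrite -leqNgt ltnW.
  have /negbTE -> : ~~ (i < k.+1)%N by rewrite -leqNgt.
  ring.
Qed.

Lemma alt_binom_sumS (g : nat -> C) k :
  \sum_(0 <= j < k.+2) (-1) ^+ j * ('C(k.+1, j))%:R * g j =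
  \sum_(0 <= j < k.+1) (-1) ^+ j * ('C(k, j))%:R * (g j - g j.+1).
Proof.
rewrite big_nat_recl //.
have -> : \sum_(0 <= i < k.+1) (-1) ^+ i.+1 * ('C(k.+1, i.+1))%:R * g i.+1
   = \sum_(0 <= i < k.+1) (-1) ^+ i.+1 * ('C(k, i.+1))%:R * g i.+1
     - \sum_(0 <= i < k.+1) (-1) ^+ i * ('C(k, i))%:R * g i.+1.
  by rewrite -sumrB; apply: eq_bigr => i _; rewrite binS natrD exprS; ring.
have -> : \sum_(0 <= j < k.+1) (-1) ^+ j * ('C(k, j))%:R * (g j - g j.+1)
   = \sum_(0 <= j < k.+1) (-1) ^+ j * ('C(k, j))%:R * g j
     - \sum_(0 <= j < k.+1) (-1) ^+ j * ('C(k, j))%:R * g j.+1.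
  by rewrite -sumrB; apply: eq_bigr => i _; ring.
rewrite [in RHS]big_nat_recl // [\sum_(0 <= i < k.+1) _ * _ * g i.+1 in LHS]big_nat_recr //=.
by rewrite ?bin0 (@bin_small k k.+1) // ?expr0; ring.
Qed.

(* The k-th finite difference of [j |-> (x + j)_m], of degree [m <= k] in [j]. *)
Lemma alt_binom_sum_poch k : forall (x : C) m, (m <= k)%N ->
  \sum_(0 <= j < k.+1) (-1) ^+ j * ('C(k, j))%:R * poch (x + j%:R) m =
  if m == k then (-1) ^+ k * (k`!)%:R else 0.
Proof.
elim: k => [|k IHk] x m.
  by rewrite leqn0 => /eqP ->; rewrite big_nat1 /= poch0 bin0 expr0 fact0 !mul1r.
move=> mk; rewrite alt_binom_sumS.
case: m mk => [|m] mk; first by rewrite big1 // => j _; rewrite !poch0 subrr mulr0.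
have -> : \sum_(0 <= j < k.+1) (-1) ^+ j * ('C(k, j))%:R
     * (poch (x + j%:R) m.+1 - poch (x + j.+1%:R) m.+1)
   = - (m.+1%:R) * \sum_(0 <= j < k.+1) (-1) ^+ j * ('C(k, j))%:R
     * poch ((x + 1) + j%:R) m.
  rewrite mulr_sumr; apply: eq_bigr => j _.
  rewrite pochSl pochSr.
  have -> : x + j.+1%:R = x + j%:R + 1 by rewrite mulrSr; ring.
  have -> : x + 1 + j%:R = x + j%:R + 1 by ring.
  by rewrite mulrSr; ring.
rewrite IHk // eqSS; case: (m == k) / eqP => [->|_]; last by rewrite mulr0.
by rewrite factS natrM exprS mulrSr; ring.
Qed.

Lemma sum_coef_bigsum (h : nat -> C) N n (p : 'I_n -> {poly C}) :
  \sum_(i < N) h i * (\sum_(m < n) p m)`_i = \sum_(m < n) \sum_(i < N) h i * (p m)`_i.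
Proof.
by rewrite exchange_big /=; apply: eq_bigr => i _; rewrite coef_sum mulr_sumr.
Qed.

Lemma sum_coef_scaleXn (h : nat -> C) N n c : (n < N)%N ->
  \sum_(i < N) h i * (c *: 'X^n)`_i = c * h n.
Proof.
move=> nN; rewrite (eq_bigr (fun i : 'I_N => if (i : nat) == n then c * h i else 0)).
  by rewrite -big_mkcond /= (big_ord1_eq _ (fun j => c * h j)) nN.
by move=> i _; rewrite coefZ coefXn; case: eqP => _ /=; ring.
Qed.

(* The functional [p |-> sum_i (b)_i p_i] detects the obstruction in
   [ode_poly_solution_obstruction]; on [F^2] its double sum collapses, by
   [alt_binom_sum_poch], to the single top term. *)
Lemma sum_poch_coef_hyp1F1reg_sqr k (b : C) N : (2 * k < N)%N ->
  \sum_(i < N) poch b i * ((hyp1F1reg k b) ^+ 2)`_i = (k`!)%:R * poch b k.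
Proof.
move=> kN.
have F2E : (hyp1F1reg k b) ^+ 2 = \sum_(m < k.+1) \sum_(j < k.+1)
    (hyp_coef k b m * hyp_coef k b j) *: 'X^(m + j).
  rewrite hyp1F1regE poly_def expr2 mulr_suml; apply: eq_bigr => m _.
  rewrite mulr_sumr; apply: eq_bigr => j _.
  by rewrite -scalerAl -scalerAr scalerA exprD.
rewrite F2E sum_coef_bigsum.
rewrite (eq_bigr (fun m : 'I_k.+1 => hyp_coef k b m * (poch b k *
    \sum_(0 <= j < k.+1) (-1) ^+ j * ('C(k, j))%:R * poch (b + j%:R) m))); last first.
  move=> m _; rewrite sum_coef_bigsum big_mkord mulr_sumr mulr_sumr.
  apply: eq_bigr => j _; rewrite sum_coef_scaleXn; last first.
    by have := ltn_ord m; have := ltn_ord j; lia.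
  rewrite addnC pochD.
  transitivity (hyp_coef k b m * ((hyp_coef k b j * poch b j) * poch (b + j%:R) m));
    first by ring.
  by rewrite hyp_coef_poch ?(ltnSE (ltn_ord j)) //; ring.
rewrite big_ord_recr /= alt_binom_sum_poch // eqxx big1 ?add0r.
  rewrite hyp_coef_kk.
  have -> : (-1) ^+ k * (poch b k * ((-1) ^+ k * (k`!)%:R))
     = ((-1) * (-1)) ^+ k * (poch b k * (k`!)%:R) :> C by rewrite exprMn; ring.
  by rewrite mulrNN mulr1 expr1n; ring.
move=> m _; rewrite alt_binom_sum_poch; last by have := ltn_ord m; lia.
by rewrite (ltn_eqF (ltn_ord m)) !mulr0.
Qed.

Lemma sum_poch_telescope (b e1 : C) (T Tp : nat -> C) N : (e1 = 1 \/ e1 = -1) ->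
  Tp 0%N = 0 -> (forall j, Tp j.+1 = T j) ->
  \sum_(j < N) e1 ^+ j * poch b j * ((2 * j%:R + 2 * b) * T j - 2 * e1 * Tp j)
    = 2 * e1 * (e1 ^+ N * poch b N) * Tp N.
Proof.
move=> e1_sign Tp0 TpS; elim: N => [|N IHN]; first by rewrite big_ord0 Tp0 mulr0.
by rewrite big_ord_recr /= IHN !TpS exprS pochSr; case: e1_sign => ->; ring.
Qed.

(* The coefficients of degree [d + 1 + 2 j] satisfy a first-order recursion;
   weighted by [e1^j (b)_j] it telescopes, and since [U] is a polynomial the
   weighted sum of its right-hand sides [c e1^j Q_(2j)] vanishes. *)
Lemma ode_poly_solution_obstruction (U Q G : {poly C}) (b e1 c : C) d M0 :
  (e1 = 1 \/ e1 = -1) -> c != 0 ->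
  (forall j, Q`_(2 * j) = e1 ^+ j * G`_j) ->
  ode_op (d%:R + (1 - 2 * b)) (2 * e1) U = c%:P * ('X^(d.+1) * Q) ->
  (exists j, (0 < j)%N /\ b = j%:R) \/
  (exists N, (M0 <= N)%N /\ \sum_(j < N) poch b j * G`_j = 0).
Proof.
move=> e1_sign c_neq0 QG U_ode.
have [/existsP [j /andP [j_gt0 /eqP bj]]|no_res] :=
  boolP [exists j : 'I_d.+2, (0 < j)%N && (b == j%:R)]; first by left; exists j.
right.
have b_nres j : (0 < j)%N -> (2 * j <= d.+1)%N -> b != j%:R.
  move=> j_gt0 jd; apply: contraNneq no_res => bj.
  have jd2 : (j < d.+2)%N by lia.
  by apply/existsP; exists (Ordinal jd2); rewrite /= j_gt0 bj eqxx.
have U_low := ode_op_low_coef_eq0 U_ode b_nres.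
pose T j := U`_(d.+1 + 2 * j).
pose Tp j := if j is j0.+1 then T j0 else 0.
have T_rec j : (2 * j%:R + 2 * b) * T j - 2 * e1 * Tp j = c * (e1 ^+ j * G`_j).
  have := congr1 (fun p : {poly C} => p`_(d.+1 + 2 * j)) U_ode.
  rewrite /= coef_ode_op coefCM coefXnM.
  have -> : (d.+1 + 2 * j < d.+1)%N = false by lia.
  rewrite (_ : (d.+1 + 2 * j - d.+1)%N = 2 * j)%N ?QG => [<-|]; last by lia.
  have -> : (if (d.+1 + 2 * j < 2)%N then 0 else U`_(d.+1 + 2 * j - 2)) = Tp j.
    case: j => [|j] /=; last first.
      by rewrite /T; case: ltnP => jd; [exfalso; lia | congr (U`__); lia].
    by case: ltnP => // d2; apply: (U_low _ 1%N) => //; lia.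
  by rewrite /T -[U`__ *+ _]mulr_natl natrD natrM; ring.
pose N := (M0 + size U)%N.
have TpN : Tp N = 0.
  rewrite /Tp /N; case E: (M0 + size U)%N => [|N'] //.
  by rewrite /T nth_default //; move: E; move: (size U) => s; clear; lia.
have e1e1 : e1 * e1 = 1 by case: e1_sign => ->; ring.
have := @sum_poch_telescope b e1 T Tp N e1_sign (erefl _) (fun j => erefl _).
rewrite TpN mulr0 (eq_bigr (fun j : 'I_N => c * (poch b j * G`_j))); last first.
  move=> j _; rewrite T_rec.
  transitivity (c * (poch b j * G`_j) * (e1 * e1) ^+ j); first by rewrite exprMn; ring.
  by rewrite e1e1 expr1n mulr1.
rewrite -mulr_sumr => /eqP; rewrite mulf_eq0 (negbTE c_neq0) /= => /eqP sum0.
by exists N; rewrite ?leq_addr.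
Qed.

(* For [w := (a1 b0 - a0 b1) / b0^2 = dM/dE] at [E0], [b0 riccati1 - 2 b1 riccati0]
   is the linearised Riccati equation [z w' = (1 + 2 z M0) w + z]; as
   [M0 = -Y'/Y], the function [u := w P^2] solves
   [z u' = (1 - 2 b + 2 e1 z^2) u + z P^2]. *)
Lemma riccati1_ode k (b e1 E0 nu : C) (a0 a1 b0 b1 : {poly C}) :
  a0 * logdY_den k b e1 = - (b0 * logdY_num k b e1) ->
  riccati0 E0 nu a0 b0 = 0 -> riccati1 E0 nu a0 a1 b0 b1 = 0 ->
  let P := Ypoly k b e1 in
  let U := (a1 * b0 - a0 * b1) * P ^+ 2 in
  let D := b0 ^+ 2 in
  'X * (U^`() * D - U * D^`())
    = ((1 - 2 * b)%:P + (2 * e1)%:P * 'X^2) * U * D + 'X * P ^+ 2 * D ^+ 2.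
Proof.
move=> M0E ric0 ric1 P U D; set W := a1 * b0 - a0 * b1.
have W_ode : 2%:R * a0 * W * 'X^2 + W * b0 * 'X - (W^`() * b0 - 2%:R * W * b0^`()) * 'X^2
    + 'X^2 * b0 ^+ 3 = 0.
  transitivity (b0 * riccati1 E0 nu a0 a1 b0 b1 - 2%:R * b1 * riccati0 E0 nu a0 b0).
    by rewrite /riccati1 /riccati0 /W derivB !derivM; ring.
  by rewrite ric0 ric1 !mulr0 subrr.
have M0E' : a0 * ('X * P) + b0 * logdY_num k b e1 = 0 by rewrite M0E addNr.
have X_neq0 : ('X : {poly C}) != 0 by rewrite polyX_eq0.
apply: (mulfI X_neq0); apply/eqP; rewrite -subr_eq0; apply/eqP.
transitivity (b0 * P * (2%:R * 'X * W * (a0 * ('X * P) + b0 * logdY_num k b e1)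
   - P * (2%:R * a0 * W * 'X^2 + W * b0 * 'X - (W^`() * b0 - 2%:R * W * b0^`()) * 'X^2
   + 'X^2 * b0 ^+ 3))).
  by rewrite /U /D /W /logdY_num -/P -!mul_polyC !expr2 !derivM; ring.
by rewrite M0E' W_ode; ring.
Qed.

Lemma riccatiN_dvd_sqr_nat (nu E0 b e1 : C) k : (e1 = 1 \/ e1 = -1) ->
  (exists A B : {poly {poly C}},
     [/\ B.[E0%:P] != 0,
         A.[E0%:P] * logdY_den k b e1 = - (B.[E0%:P] * logdY_num k b e1) &
         exists G, riccatiN nu A B = ('X - (E0%:P)%:P) ^+ 2 * G]) ->
  exists n : nat, b - 1 + k%:R = n%:R.
Proof.
move=> e1_sign [A [B [B_neq0 M0E [G ricG]]]].
have [a1 [b1 [ric0 ric1]]] := riccatiN_dvd_sqr ricG.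
have /= UD_ode := riccati1_ode M0E ric0 ric1; set P := Ypoly k b e1 in UD_ode.
have [d [c [U1 [c_neq0 U1_ode]]]] :=
  rational_ode_solution_poly (expf_neq0 2 B_neq0) UD_ode.
have P2E j : (P ^+ 2)`_(2 * j) = e1 ^+ j * ((hyp1F1reg k b) ^+ 2)`_j.
  by rewrite /P /Ypoly expr2 -comp_polyM -expr2 coef_comp_scaleX2.
have [[j [j_gt0 ->]] | [N [kN sum0]]] :=
  ode_poly_solution_obstruction (2 * k).+1 e1_sign c_neq0 P2E U1_ode.
  by exists (j.-1 + k)%N; rewrite natrD; case: j j_gt0 => // j _; rewrite mulrSr; ring.
have := sum_poch_coef_hyp1F1reg_sqr b kN; rewrite sum0 => /esym/eqP.
rewrite mulf_eq0 (negbTE (natr_fact_neq0 k)) /= => /prodf_eq0 [i _ /eqP bi].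
exists (k - i.+1)%N; rewrite natrB ?ltn_ord //.
have -> : b = - (i : nat)%:R by apply/eqP; rewrite -subr_eq0 opprK bi.
by rewrite mulrSr; ring.
Qed.

Lemma deriv_scaleX2 (e : C) : (e *: 'X^2 : {poly C})^`() = (2 * e)%:P * 'X.
Proof. by rewrite derivZ derivXn /= expr1 -mul_polyC -mulr_natl; ring. Qed.

Lemma Ypoly_ode k (b e1 : C) :
  let P := Ypoly k b e1 in
  'X * P^`()^`() + (2 * b - 1)%:P * P^`() - (2 * e1)%:P * ('X^2 * P^`())
  + (4 * e1 * k%:R)%:P * ('X * P) = 0.
Proof.
move=> P; set F := hyp1F1reg k b; set q := e1 *: ('X^2 : {poly C}).
have dP : P^`() = (F^`() \Po q) * ((2 * e1)%:P * 'X).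
  by rewrite /P /Ypoly deriv_comp deriv_scaleX2.
have ddP : P^`()^`() = ((F^`()^`() \Po q) * ((2 * e1)%:P * 'X)) * ((2 * e1)%:P * 'X)
    + (F^`() \Po q) * (2 * e1)%:P.
  by rewrite dP derivM deriv_comp deriv_scaleX2 derivM derivC derivX mul0r add0r mulr1.
have kummer := congr1 (comp_poly q) (hyp1F1reg_kummer k b).
rewrite /= !comp_polyD !comp_polyM comp_polyB comp_polyX !comp_polyC ?comp_poly0 -/F in kummer.
have qE : q = e1%:P * 'X^2 by rewrite /q mul_polyC.
transitivity ((4 * e1)%:P * 'X * (q * (F^`()^`() \Po q) + (b%:P - q) * (F^`() \Po q)
   + (k%:R)%:P * (F \Po q))); last by rewrite kummer mulr0.
by rewrite ddP dP /P /Ypoly -/F -/q qE; ring.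
Qed.

Lemma riccati0_Ypoly k (nu e1 e2 : C) (Q0 : {poly C}) :
  (e1 = 1 \/ e1 = -1) -> (e2 = 1 \/ e2 = -1) ->
  let E0 := e1 * (4 * k%:R + 2) + 4 * e2 * nu in
  let b := 2 * e1 * e2 * nu + 1 in
  let P := Ypoly k b e1 in
  riccati0 E0 nu (- (Q0 * P * logdY_num k b e1)) ('X * Q0 * P ^+ 2) =
  'X^3 * Q0 ^+ 2 * P ^+ 3 * ('X * P^`()^`() + (2 * b - 1)%:P * P^`()
     - (2 * e1)%:P * ('X^2 * P^`()) + (4 * e1 * k%:R)%:P * ('X * P)).
Proof.
move=> e1_sign e2_sign E0 b P.
rewrite /riccati0 /potential0 /logdY_num -/P !derivE -!mul_polyC /E0 /b.
by case: e1_sign => ->; case: e2_sign => ->; ring.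
Qed.

Lemma riccati1_Ypoly (E0 nu b e1 m : C) (P Q0 U : {poly C}) :
  riccati1 E0 nu (- (Q0 * P * (b *: P - e1 *: ('X^2 * P) + 'X * P^`()))) U
                 ('X * Q0 * P ^+ 2) 0 =
  'X^2 * Q0 * P * (- P * (ode_op (m + 2 - 2 * b) (2 * e1) U - 'X^2 * Q0 * P ^+ 2))
  + ('X * Q0^`() - m%:P * Q0) * U * P ^+ 2 * 'X^2.
Proof. by rewrite /riccati1 /ode_op !derivE -!mul_polyC; ring. Qed.

Lemma ode_range_stepX2 (b e1 : C) M i : (e1 = 1 \/ e1 = -1) ->
  ode_range (2 * (M%:R - b)) (2 * e1)
    ('X^(2 * i.+1) - (e1 * (i%:R - M%:R + b)) *: 'X^(2 * i)).
Proof.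
move=> e1_sign.
have := ode_rangeZ (- (e1 / 2))
  (ex_intro _ 'X^(2 * i) (erefl (ode_op (2 * (M%:R - b)) (2 * e1) 'X^(2 * i)))).
rewrite ode_opXn scalerBr !scalerA.
have -> : - (e1 / 2) * ((2 * i)%N%:R - 2 * (M%:R - b)) = - (e1 * (i%:R - M%:R + b)).
  by rewrite natrM; field.
have -> : - (e1 / 2) * (2 * e1) = -1 by case: e1_sign => ->; field.
by rewrite scaleN1r scaleNr opprK [- _ + _]addrC [(2 * i.+1)%N]mulnS.
Qed.

Lemma ode_range_Xn_poch (b e1 : C) M j : (e1 = 1 \/ e1 = -1) ->
  ode_range (2 * (M%:R - b)) (2 * e1)
    ('X^(2 * (M + j)) - (e1 ^+ j * poch b j) *: 'X^(2 * M)).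
Proof.
move=> e1_sign; elim: j => [|j IHj].
  by rewrite addn0 expr0 poch0 mulr1 scale1r subrr; apply: ode_range0.
have step := ode_range_stepX2 b M (M + j) e1_sign.
have -> : 'X^(2 * (M + j.+1)) - (e1 ^+ j.+1 * poch b j.+1) *: 'X^(2 * M) =
   ('X^(2 * (M + j).+1) - (e1 * ((M + j)%:R - M%:R + b)) *: 'X^(2 * (M + j)))
   + (e1 * (b + j%:R)) *: ('X^(2 * (M + j)) - (e1 ^+ j * poch b j) *: 'X^(2 * M)).
  by rewrite addnS natrD exprS pochSr -!mul_polyC; ring.
by apply: ode_rangeD => //; apply: ode_rangeZ.
Qed.

Lemma ode_range_Xn_shift (b e1 : C) M i j : (e1 = 1 \/ e1 = -1) ->
  exists kappa, ode_range (2 * (M%:R - b)) (2 * e1)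
                  ('X^(2 * (i + j)) - kappa *: 'X^(2 * i)).
Proof.
move=> e1_sign; elim: j => [|j [kappa IHj]].
  by exists 1; rewrite addn0 scale1r subrr; apply: ode_range0.
have step := ode_range_stepX2 b M (i + j) e1_sign.
exists (e1 * ((i + j)%:R - M%:R + b) * kappa).
have -> : 'X^(2 * (i + j.+1)) - (e1 * ((i + j)%:R - M%:R + b) * kappa) *: 'X^(2 * i) =
   ('X^(2 * (i + j).+1) - (e1 * ((i + j)%:R - M%:R + b)) *: 'X^(2 * (i + j)))
   + (e1 * ((i + j)%:R - M%:R + b)) *: ('X^(2 * (i + j)) - kappa *: 'X^(2 * i)).
  by rewrite addnS -!mul_polyC; ring.
by apply: ode_rangeD => //; apply: ode_rangeZ.
Qed.

(* Modulo the range, [X^(2(M+i))] is [e1^i (b)_i X^(2M)]; summed against the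
   coefficients of [P^2] this is the functional of
   [sum_poch_coef_hyp1F1reg_sqr]. *)
Lemma ode_range_Xn_Ypoly_sqr_congr (b e1 : C) k M : (e1 = 1 \/ e1 = -1) ->
  ode_range (2 * (M%:R - b)) (2 * e1)
    ('X^(2 * M) * (Ypoly k b e1) ^+ 2 - ((k`!)%:R * poch b k) *: 'X^(2 * M)).
Proof.
move=> e1_sign; set G := hyp1F1reg k b ^+ 2.
have P2E : (Ypoly k b e1) ^+ 2 = G \Po (e1 *: 'X^2).
  by rewrite /Ypoly /G expr2 -comp_polyM -expr2.
have XP2E : 'X^(2 * M) * (G \Po (e1 *: 'X^2))
    = \sum_(i < size G) (G`_i * e1 ^+ i) *: 'X^(2 * (M + i)).
  rewrite comp_polyE mulr_sumr; apply: eq_bigr => i _.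
  by rewrite exprZn -exprM scalerA -scalerAr -exprD mulnDr.
have e1e1 : e1 * e1 = 1 by case: e1_sign => ->; ring.
have size_G : (size G <= (2 * k).+1)%N.
  have size_F : (size (hyp1F1reg k b) <= k.+1)%N by rewrite hyp1F1regE size_poly.
  apply: leq_trans (size_poly_exp_leq _ 2) _.
  by move: size_F; case: (size _) => [|s] //= sk; lia.
have sumE : \sum_(i < size G) G`_i * e1 ^+ i * (e1 ^+ i * poch b i)
    = (k`!)%:R * poch b k.
  transitivity (\sum_(i < size G) poch b i * G`_i).
    apply: eq_bigr => i _.
    transitivity (poch b i * G`_i * (e1 * e1) ^+ i); first by rewrite exprMn; ring.
    by rewrite e1e1 expr1n mulr1.
  rewrite (big_ord_widen (2 * k).+1 (fun i => poch b i * G`_i)) // big_mkcond /=.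
  rewrite -(sum_poch_coef_hyp1F1reg_sqr b (ltnSn (2 * k))) -/G.
  by apply: eq_bigr => i _; case: ltnP => // Gi; rewrite nth_default // mulr0.
rewrite P2E XP2E -sumE scaler_suml -sumrB; apply: ode_range_sum => i.
rewrite -(scalerA (G`_i * e1 ^+ i)) -scalerBr; apply: ode_rangeZ.
exact: ode_range_Xn_poch.
Qed.

(* At the resonance [i = k] the step lemma puts [X^(2(k+1))] itself in the range. *)
Lemma ode_range_Xn_resonant (b e1 : C) k M : (e1 = 1 \/ e1 = -1) ->
  (k < M)%N -> b = M%:R - k%:R -> ode_range (2 * (M%:R - b)) (2 * e1) 'X^(2 * M).
Proof.
move=> e1_sign kM bE.
have := ode_range_stepX2 b M k e1_sign.
rewrite bE (_ : k%:R - M%:R + (M%:R - k%:R) = 0) ?mulr0 ?scale0r ?subr0; last by ring.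
have [kappa] := ode_range_Xn_shift b M k.+1 (M - k.+1) e1_sign.
rewrite subnKC // bE => range_shift range_k.
by rewrite -(subrK (kappa *: 'X^(2 * k.+1)) 'X^(2 * M)); apply: ode_rangeD => //; apply: ode_rangeZ.
Qed.

Lemma ode_range_Xn_Ypoly_sqr (b e1 : C) k n : (e1 = 1 \/ e1 = -1) ->
  b - 1 + k%:R = n%:R ->
  ode_range (2 * (n.+1%:R - b)) (2 * e1) ('X^(2 * n.+1) * (Ypoly k b e1) ^+ 2).
Proof.
move=> e1_sign bn.
have range_sub := ode_range_Xn_Ypoly_sqr_congr b k n.+1 e1_sign.
have [pochk0|pochk_neq0] := eqVneq (poch b k) 0.
  by move: range_sub; rewrite pochk0 mulr0 scale0r subr0.
have bE : b = n.+1%:R - k%:R by rewrite mulrSr -bn; ring.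
have kn : (k < n.+1)%N.
  rewrite ltnNge; apply: contra pochk_neq0 => nk; apply/prodf_eq0.
  have kn1 : (k - n.+1 < k)%N by lia.
  by exists (Ordinal kn1) => //=; rewrite bE natrB //; apply/eqP; ring.
set XP2 := 'X^(2 * n.+1) * _; set c := (k`!)%:R * poch b k.
have -> : XP2 = (XP2 - c *: 'X^(2 * n.+1)) + c *: 'X^(2 * n.+1) by rewrite subrK.
apply: ode_rangeD; first exact: range_sub.
exact/ode_rangeZ/(ode_range_Xn_resonant e1_sign kn bE).
Qed.

Lemma Ypoly_neq0 k (b e1 : C) : e1 != 0 -> Ypoly k b e1 != 0.
Proof.
move=> e1_neq0; apply/eqP => P0.
have := coef_comp_scaleX2 (hyp1F1reg k b) e1 k.
rewrite -/(Ypoly k b e1) P0 coef0 hyp1F1regE coef_poly ltnSn hyp_coef_kk => /esym/eqP.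
by rewrite mulf_eq0 !expf_eq0 (negbTE e1_neq0) oppr_eq0 oner_eq0 !andbF.
Qed.

(* [M = A/B] has [M(E0) = -Y'/Y] and [dM/dE(E0) = U / (X^(2n+1) P^2)]; the
   factor [X^(2n)] makes the last term of [riccati1_Ypoly] vanish. *)
Lemma riccatiN_dvd_sqr_of_nat (nu e1 e2 : C) k n :
  (e1 = 1 \/ e1 = -1) -> (e2 = 1 \/ e2 = -1) ->
  2 * e1 * e2 * nu + k%:R = n%:R ->
  let E0 := e1 * (4 * k%:R + 2) + 4 * e2 * nu in
  let b := 2 * e1 * e2 * nu + 1 in
  exists A B : {poly {poly C}},
     [/\ B.[E0%:P] != 0,
         A.[E0%:P] * logdY_den k b e1 = - (B.[E0%:P] * logdY_num k b e1) &
         exists G, riccatiN nu A B = ('X - (E0%:P)%:P) ^+ 2 * G].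
Proof.
move=> e1_sign e2_sign nuk E0 b; set P := Ypoly k b e1.
have bn : b - 1 + k%:R = n%:R by rewrite /b addrK.
have [U U_ode] := ode_range_Xn_Ypoly_sqr e1_sign bn.
set Q0 : {poly C} := 'X^(2 * n).
set a0 := - (Q0 * P * logdY_num k b e1); set b0 := 'X * Q0 * P ^+ 2.
set e := 'X - (E0%:P)%:P.
exists (a0%:P + e * U%:P + e ^+ 2 * 0), (b0%:P + e * 0%:P + e ^+ 2 * 0).
have at_E0 (x y : {poly C}) r : (x%:P + e * y%:P + e ^+ 2 * r).[E0%:P] = x.
  by rewrite /e !hornerE subrr; ring.
have P_neq0 : P != 0 by apply: Ypoly_neq0; case: e1_sign => ->; rewrite ?oppr_eq0 oner_eq0.
split; rewrite ?at_E0.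
- by rewrite /b0 !mulf_neq0 ?expf_neq0 ?polyX_eq0.
- by rewrite /a0 /b0 /logdY_den -/P; ring.
have [J ->] := riccatiN_taylor E0 nu a0 U b0 0 0 0.
exists J.
have -> : riccati0 E0 nu a0 b0 = 0.
  by rewrite /a0 /b0 riccati0_Ypoly // -/b -/P Ypoly_ode mulr0.
have -> : riccati1 E0 nu a0 U b0 0 = 0.
  rewrite /a0 /b0 /logdY_num -/P (riccati1_Ypoly _ _ _ _ (2 * n)%N%:R).
  have -> : (2 * n)%N%:R + 2 - 2 * b = 2 * (n.+1%:R - b) :> C.
    by rewrite natrM mulrSr; ring.
  rewrite U_ode -/P.
  have -> : ('X^(2 * n.+1) : {poly C}) = 'X^2 * Q0 by rewrite /Q0 mulnS -exprD.
  rewrite subrr !mulr0 add0r.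
  by rewrite Xderiv_Xn subrr !mul0r.
by rewrite polyC0 mulr0 !add0r.
Qed.

End ConfluentRiccati.

Theorem mainTheorem11 (C : numClosedFieldType) (nu : C) (k : nat) (e1 e2 : C) :
  (e1 = 1 \/ e1 = -1) -> (e2 = 1 \/ e2 = -1) ->
  let E0 := e1 * (4 * k%:R + 2) + 4 * e2 * nu in
  let b := 2 * e1 * e2 * nu + 1 in
  (exists A B : {poly {poly C}},
     [/\ B.[E0%:P] != 0,
         A.[E0%:P] * logdY_den k b e1 = - (B.[E0%:P] * logdY_num k b e1) &
         exists G : {poly {poly C}},
           riccatiN nu A B = ('X - (E0%:P)%:P) ^+ 2 * G])
  <-> exists n : nat, 2 * e1 * e2 * nu + k%:R = n%:R.
Proof.
move=> e1_sign e2_sign E0 b; split.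
- by case/(riccatiN_dvd_sqr_nat e1_sign) => n; rewrite /b addrK; exists n.
- by case=> n nuk; exact: (riccatiN_dvd_sqr_of_nat e1_sign e2_sign nuk).
Qed.
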